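(* Let $\mathcal{P}=\{1,\dots,p\}$ and let $M(1),\dots,M(p)\in\mathbb{R}^{n\times n}$ be exponentially stable (Hurwitz) matrices. Let $\tau_D>0$, $N_0>0$ and $\lambda>0$. Then there exists $g_0>0$ such that for every $g\ge g_0$ there is a constant $c>0$ such that, for every switching signal $\sigma\in\mathcal{S}_{ave}(\tau_D,N_0)$ and every initial condition, the solution of $\dot x=gM(\sigma(t))x$ satisfies $\|x(t)\|\le c\,e^{-\lambda t}\|x(0)\|$ for all $t\ge0$.
   Context: A switching signal is a piecewise-constant, right-continuous map $\sigma:[0,\infty)\to\mathcal{P}$ with finitely many discontinuities on each bounded interval. For $t\ge t_0\ge0$, $N_\sigma(t_0,t)$ is the number of discontinuities of $\sigma$ in the open interval $(t_0,t)$, and $\mathcal{S}_{ave}(\tau_D,N_0)$ is the set of switching signals with $N_\sigma(t_0,t)\le N_0+\frac{t-t_0}{\tau_D}$ for all $t\ge t_0\ge0$. $\|\cdot\|$ is any vector norm (with induced matrix norm). *)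

From mathcomp Require Import all_boot.
From Stdlib Require Import Reals.
Open Scope R_scope.

Definition vec (n : nat) := 'I_n -> R.
Definition mat (n : nat) := 'I_n -> 'I_n -> R.

Definition mulmv {n : nat} (A : mat n) (x : vec n) : vec n :=
  fun i => \big[Rplus/R0]_(j < n) (A i j * x j).

Definition is_norm {n : nat} (nrm : vec n -> R) : Prop :=
  (forall x, 0 <= nrm x) /\
  (forall x, nrm x = 0 -> forall i, x i = 0) /\
  (forall (a : R) (x : vec n), nrm (fun i => a * x i) = Rabs a * nrm x) /\
  (forall x y : vec n, nrm (fun i => x i + y i) <= nrm x + nrm y).

(* Hurwitz: every (complex) eigenvalue a + i b of A has a < 0.
   A (u + i w) = (a + i b)(u + i w) with u + i w <> 0, written in real terms. *)
Definition hurwitz {n : nat} (A : mat n) : Prop :=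
  forall (a b : R) (u w : vec n),
    (exists i, u i <> 0 \/ w i <> 0) ->
    (forall i, mulmv A u i = a * u i - b * w i) ->
    (forall i, mulmv A w i = b * u i + a * w i) ->
    a < 0.

Definition locally_constant_at {P : Type} (sigma : R -> P) (t : R) : Prop :=
  exists d, 0 < d /\ forall s, 0 <= s -> Rabs (s - t) < d -> sigma s = sigma t.

Definition discontinuity {P : Type} (sigma : R -> P) (t : R) : Prop :=
  0 <= t /\ ~ locally_constant_at sigma t.

Definition switching_signal {p : nat} (sigma : R -> 'I_p) : Prop :=
  (forall t, 0 <= t -> exists d, 0 < d /\
      forall s, t <= s < t + d -> sigma s = sigma t) /\
  (forall T, 0 <= T -> exists l : list R,
      forall t, 0 <= t <= T -> discontinuity sigma t -> List.In t l).

(* N_sigma(t0,t) <= K : every finite set of discontinuities in (t0,t) has at most K elements *)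
Definition N_sigma_le {P : Type} (sigma : R -> P) (t0 t K : R) : Prop :=
  forall l : list R, List.NoDup l ->
    (forall s, List.In s l -> t0 < s < t /\ discontinuity sigma s) ->
    INR (List.length l) <= K.

Definition S_ave {p : nat} (tauD N0 : R) (sigma : R -> 'I_p) : Prop :=
  switching_signal sigma /\
  forall t0 t, 0 <= t0 -> t0 <= t -> N_sigma_le sigma t0 t (N0 + (t - t0) / tauD).

(* x is a (Caratheodory) solution on [0,oo) of  x' = g M(sigma(t)) x :
   continuous on [0,oo), and satisfying the ODE at every t > 0 that is not a
   switching time. *)
Definition solution {n p : nat} (g : R) (M : 'I_p -> mat n) (sigma : R -> 'I_p)
    (x : R -> vec n) : Prop :=
  (forall (i : 'I_n) t, 0 <= t -> forall eps, 0 < eps -> exists d, 0 < d /\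
      forall s, 0 <= s -> Rabs (s - t) < d -> Rabs (x s i - x t i) < eps) /\
  (forall t, 0 < t -> ~ discontinuity sigma t -> forall i : 'I_n,
      derivable_pt_lim (fun s => x s i) t (g * mulmv (M (sigma t)) (x t) i)).

(* For a Hurwitz matrix A, triangularize its complexification by a unitary change of basis
   (Schur) and rescale the k-th coordinate by eps^-k: for small eps the off-diagonal part is
   negligible, so q(y) = |y W|^2 (W complex invertible) satisfies q'(y).(A y) <= - be q(y).
   Fixing a common rate be and a common constant K with |y|^2 <= K q_k(y) <= K^2 |y|^2 for all
   modes, the energy q_{sigma(t)}(x t) e^(2 be g t) does not increase between switches and
   grows by at most K^2 at a switch.  An average dwell time allows at most N0 + t/tauD
   switches on (0, t), whence
     q(x t) <= K^2 e^(N0 ln K^2) e^((ln K^2 / tauD - 2 be g) t) q(x 0),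
   and g >= (2 lam + ln K^2 / tauD) / (2 be) makes the rate at most - 2 lam.  The given norm
   is equivalent to the Euclidean one, which turns this into the claimed bound. *)

From mathcomp Require Import all_boot all_algebra.
From mathcomp Require Import complex Rstruct.
From Stdlib Require Import Reals Lra Psatz FunctionalExtensionality ClassicalChoice Classical.
Import GRing.Theory Num.Theory.

Delimit Scope ring_scope with ring.
Open Scope R_scope.

Lemma sumR_le {n} (F G : 'I_n -> R) :
  (forall i, F i <= G i) -> \big[Rplus/R0]_(i < n) F i <= \big[Rplus/R0]_(i < n) G i.
Proof. by move=> H; apply/RleP; apply: ler_sum => i _; apply/RleP. Qed.

Lemma sumR_ge0 {n} (F : 'I_n -> R) : (forall i, 0 <= F i) -> 0 <= \big[Rplus/R0]_(i < n) F i.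
Proof. by move=> H; apply/RleP; apply: sumr_ge0 => i _; apply/RleP. Qed.

Lemma sumR_ge_term {n} (F : 'I_n -> R) j :
  (forall i, 0 <= F i) -> F j <= \big[Rplus/R0]_(i < n) F i.
Proof.
move=> H; rewrite (bigD1 j) //=; rewrite -{1}(Rplus_0_r (F j)).
by apply: Rplus_le_compat_l; apply/RleP; apply: sumr_ge0 => i _; apply/RleP.
Qed.

Lemma sumR_distr {n} (c : R) (F : 'I_n -> R) :
  \big[Rplus/R0]_(i < n) (c * F i) = c * \big[Rplus/R0]_(i < n) F i.
Proof. by rewrite -(big_distrr (plus:=Rplus)). Qed.

Lemma sumR_const {n} (c : R) : \big[Rplus/R0]_(i < n) c = INR n * c.
Proof.
elim: n => [|n IH]; first by rewrite big_ord0 /=; ring.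
rewrite big_ord_recr /= IH; change (INR n * c + c = INR n.+1 * c); rewrite S_INR; ring.
Qed.

Lemma Rabs_sumR {n} (F : 'I_n -> R) :
  Rabs (\big[Rplus/R0]_(i < n) F i) <= \big[Rplus/R0]_(i < n) Rabs (F i).
Proof.
apply: (big_ind2 (fun x y => Rabs x <= y)) => [|x1 y1 x2 y2 h1 h2|i _] /=.
- rewrite Rabs_R0; lra.
- have := Rabs_triang x1 x2; lra.
- lra.
Qed.

Lemma exists_pos_lower_bound {p} (f : 'I_p -> R) :
  (forall k, 0 < f k) -> exists a, 0 < a /\ forall k, a <= f k.
Proof.
move=> hf; have hs : 0 <= \big[Rplus/R0]_(k < p) / f k.
  by apply: sumR_ge0 => k; apply/Rlt_le/Rinv_0_lt_compat.
exists (/ (1 + \big[Rplus/R0]_(k < p) / f k)); split; first by apply: Rinv_0_lt_compat; lra.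
move=> k; rewrite -(Rinv_inv (f k)).
apply: Rinv_le_contravar; first exact/Rinv_0_lt_compat.
have := sumR_ge_term (fun l => / f l) k (fun l => Rlt_le _ _ (Rinv_0_lt_compat _ (hf l))).
lra.
Qed.

Lemma exists_upper_bound {p} (f : 'I_p -> R) : exists b, 1 <= b /\ forall k, f k <= b.
Proof.
have hs : 0 <= \big[Rplus/R0]_(k < p) Rabs (f k) by apply: sumR_ge0 => k; exact: Rabs_pos.
exists (1 + \big[Rplus/R0]_(k < p) Rabs (f k)); split; first lra.
move=> k; have := sumR_ge_term (fun l => Rabs (f l)) k (fun l => Rabs_pos (f l)).
have := Rle_abs (f k); lra.
Qed.

Definition sq {n} (y : 'I_n -> R) : R := \big[Rplus/R0]_(i < n) (y i * y i).

Definition lin {n m} (W : 'I_n -> 'I_m -> R) (y : 'I_n -> R) (j : 'I_m) : R :=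
  \big[Rplus/R0]_(i < n) (y i * W i j).

Lemma sq_ge0 {n} (y : 'I_n -> R) : 0 <= sq y.
Proof. by apply: sumR_ge0 => i; apply: Rle_0_sqr. Qed.

Lemma Rabs_le_sqrt_sq {n} (y : 'I_n -> R) i : Rabs (y i) <= sqrt (sq y).
Proof.
rewrite -sqrt_Rsqr_abs; apply: sqrt_le_1_alt; rewrite /Rsqr.
exact: (sumR_ge_term (fun k => y k * y k) i (fun k => Rle_0_sqr (y k))).
Qed.

Lemma Rabs_lin_le {n m} (L : 'I_n -> 'I_m -> R) a j :
  Rabs (lin L a j) <= sqrt (sq a) * \big[Rplus/R0]_(i < n) Rabs (L i j).
Proof.
apply: (Rle_trans _ _ _ (Rabs_sumR _)); rewrite -sumR_distr; apply: sumR_le => i.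
rewrite Rabs_mult; apply: Rmult_le_compat_r; [exact: Rabs_pos | exact: Rabs_le_sqrt_sq].
Qed.

Lemma sq_lin2_le {n m} (L L' : 'I_n -> 'I_m -> R) : exists K, 0 < K /\
  forall a b, sq (fun j => lin L a j + lin L' b j) <= K * (sq a + sq b).
Proof.
pose c j := \big[Rplus/R0]_(i < n) Rabs (L i j) + \big[Rplus/R0]_(i < n) Rabs (L' i j).
have hc j : 0 <= c j.
  by apply: Rplus_le_le_0_compat; apply: sumR_ge0 => i; exact: Rabs_pos.
have hcc : 0 <= \big[Rplus/R0]_(j < m) (c j * c j) by apply: sumR_ge0 => j; apply: Rle_0_sqr.
exists (1 + \big[Rplus/R0]_(j < m) (c j * c j)); split; first lra.
move=> a b; set S := sq a + sq b.
have hS : 0 <= S by have := sq_ge0 a; have := sq_ge0 b; rewrite /S; lra.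
have hsa : sqrt (sq a) <= sqrt S by apply: sqrt_le_1_alt; have := sq_ge0 b; rewrite /S; lra.
have hsb : sqrt (sq b) <= sqrt S by apply: sqrt_le_1_alt; have := sq_ge0 a; rewrite /S; lra.
have hj j : (lin L a j + lin L' b j) * (lin L a j + lin L' b j) <= S * (c j * c j).
  have ha := Rabs_lin_le L a j; have hb := Rabs_lin_le L' b j.
  have hLa : 0 <= \big[Rplus/R0]_(i < n) Rabs (L i j) by apply: sumR_ge0 => i; exact: Rabs_pos.
  have hLb : 0 <= \big[Rplus/R0]_(i < n) Rabs (L' i j) by apply: sumR_ge0 => i; exact: Rabs_pos.
  have hx : Rabs (lin L a j + lin L' b j) <= sqrt S * c j.
    apply: (Rle_trans _ _ _ (Rabs_triang _ _)); rewrite /c Rmult_plus_distr_l.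
    apply: Rplus_le_compat; (apply: Rle_trans; first eassumption);
      apply: Rmult_le_compat_r => //.
  have h0 : 0 <= sqrt S * c j by apply: Rmult_le_pos; [exact: sqrt_pos | exact: hc].
  have -> : S * (c j * c j) = (sqrt S * c j) * (sqrt S * c j)
    by rewrite -{1}(sqrt_sqrt S hS); ring.
  rewrite [X in X <= _](Rsqr_abs (lin L a j + lin L' b j)) /Rsqr.
  apply: Rmult_le_compat => //; exact: Rabs_pos.
apply: (@Rle_trans _ (\big[Rplus/R0]_(j < m) (S * (c j * c j)))); first exact: sumR_le.
rewrite sumR_distr.
have : 0 <= S * \big[Rplus/R0]_(j < m) (c j * c j) by exact: Rmult_le_pos.
nra.
Qed.

Lemma lin0 {n m} (L : 'I_n -> 'I_m -> R) j : lin L (fun _ => 0) j = 0.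
Proof. by rewrite /lin big1 // => i _; ring. Qed.

Lemma sq_lin_le {n m} (L : 'I_n -> 'I_m -> R) :
  exists K, 0 < K /\ forall a, sq (lin L a) <= K * sq a.
Proof.
have [K [K0 HK]] := sq_lin2_le L L; exists K; split => // a.
have sq0 : sq (fun _ : 'I_n => 0) = 0 by rewrite /sq big1 // => i _; ring.
have -> : lin L a = (fun j => lin L a j + lin L (fun _ => 0) j).
  by apply: functional_extensionality => j; rewrite lin0; ring.
by have := HK a (fun _ => 0); rewrite sq0 Rplus_0_r.
Qed.

(** * Schur form of a Hurwitz matrix *)

Notation "r &C" := (@Complex R r 0) (at level 2, format "r &C").

Section ComplexEigen.
Local Notation Re := (@complex.Re R).
Local Notation Im := (@complex.Im R).
Local Open Scope ring_scope.
Local Open Scope complex_scope.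
Local Notation C := (R[i]).

(* Row-vector convention: [u *m cmxT A] is [A] applied to the column [u^T]. *)
Definition cmxT {n} (A : mat n) : 'M[C]_n := \matrix_(i, j) (A j i)&C.

Lemma Re_mulrC (z : C) (r : R) : Re (z * r &C) = Re z * r.
Proof. by case: z => a b /=; rewrite mulr0 subr0. Qed.
Lemma Im_mulrC (z : C) (r : R) : Im (z * r &C) = Im z * r.
Proof. by case: z => a b /=; rewrite mulr0 add0r. Qed.
Lemma Re_mulCr (z : C) (r : R) : Re (r &C * z) = r * Re z.
Proof. by case: z => a b /=; rewrite mul0r subr0. Qed.
Lemma Im_mulCr (z : C) (r : R) : Im (r &C * z) = r * Im z.
Proof. by case: z => a b /=; rewrite mul0r addr0. Qed.

Lemma rc_mul (a b : R) : a &C * b &C = (a * b)&C :> C.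
Proof. by congr Complex; rewrite /= ?mul0r ?mulr0 ?subr0 ?addr0. Qed.

Lemma rc_sum {n} (F : 'I_n -> R) : (\big[Rplus/R0]_(i < n) F i)&C = \sum_(i < n) (F i)&C.
Proof. by apply: (big_morph (fun r => r&C)) => // x y; congr Complex; rewrite /= addr0. Qed.

Lemma hurwitz_eigen_Re_lt0 {n} (A : mat n) (u : 'rV[C]_n) (l : C) :
  hurwitz A -> u != 0 -> u *m cmxT A = l *: u -> Re l < 0.
Proof.
move=> H u0 eq.
have key j : \sum_k u 0 k * (A j k) &C = l * u 0 j.
  have := congr1 (fun M : 'M[C]_(1,n) => M 0 j) eq; rewrite !mxE => <-.
  by apply: eq_bigr => k _; rewrite mxE.
apply/RltP; apply: (H (Re l) (Im l) (fun i => Re (u 0 i)) (fun i => Im (u 0 i))).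
- have [i ui] : exists i, u 0 i != 0.
    apply/existsP; apply: contraNT u0; rewrite negb_exists => /forallP Hi.
    by apply/eqP/rowP => i; rewrite mxE; apply/eqP; have := Hi i; rewrite negbK.
  exists i; case: (u 0 i) ui => a b; rewrite eq_complex /= negb_and => /orP[] /eqP.
  + by left.
  + by right.
- move=> j; rewrite /mulmv; have := congr1 Re (key j); rewrite raddf_sum /= => e.
  transitivity (\sum_k Re (u 0 k * (A j k) &C)).
    by apply: eq_bigr => k _; rewrite Re_mulrC mulrC.
  by rewrite e; case: (l) => a b; case: (u 0 j) => c d.
- move=> j; rewrite /mulmv; have := congr1 Im (key j); rewrite raddf_sum /= => e.
  transitivity (\sum_k Im (u 0 k * (A j k) &C)).
    by apply: eq_bigr => k _; rewrite Im_mulrC mulrC.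
  by rewrite e; case: (l) => a b; case: (u 0 j) => c d /=; rewrite addrC.
Qed.

Lemma trig_conj_diag_eigen {n} (B T P : 'M[C]_n) : P \in unitmx -> T = P *m B *m invmx P ->
  is_trig_mx T -> forall j, exists2 u : 'rV[C]_n, u != 0 & u *m B = T j j *: u.
Proof.
move=> Pu eT Ttrig j.
have : eigenvalue T (T j j).
  rewrite eigenvalue_root_char char_poly_trig // (bigD1 j) //= rootM.
  by rewrite root_XsubC eqxx.
move=> /eigenvalueP [v vT v0]; exists (v *m P); first by rewrite mulmx_free_eq0 ?row_free_unit.
have TP : T *m P = P *m B by rewrite eT mulmxKV.
by rewrite -mulmxA -TP mulmxA vT scalemxAl.
Qed.

Lemma hurwitz_schur {n} (A : mat n) : hurwitz A -> exists2 P : 'M[C]_n, P \in unitmx &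
  let T := P *m cmxT A *m invmx P in is_trig_mx T /\ forall j, Re (T j j) < 0.
Proof.
move=> H.
have comm : {in [:: cmxT A] &, forall X Y, comm_mx X Y}.
  by move=> X Y; rewrite !inE => /eqP -> /eqP ->.
have [P Pu /allP /= HP] := cotrigonalization comm.
have Punit := unitarymx_unit Pu.
exists P => //; have Ttrig : is_trig_mx (P *m cmxT A *m invmx P).
  by rewrite -conjumx //; exact: HP (mem_head _ _).
split => // j; have [u u0 eu] := trig_conj_diag_eigen _ _ _ Punit erefl Ttrig j.
exact: (hurwitz_eigen_Re_lt0 _ _ _ H u0 eu).
Qed.
End ComplexEigen.

Lemma mul_le_abs_sumsq (x y t : R) : x * y * t <= Rabs t * (x * x + y * y) / 2.
Proof.
case: (Rle_dec 0 t) => h.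
- rewrite Rabs_right; last lra.
  by have := Rmult_le_pos _ _ h (Rle_0_sqr (x - y)); rewrite /Rsqr; lra.
- rewrite Rabs_left; last lra.
  by have := Rmult_le_pos (- t) _ ltac:(lra) (Rle_0_sqr (x + y)); rewrite /Rsqr; lra.
Qed.

Section ComplexDot.
Local Notation Re := (@complex.Re R).
Local Notation Im := (@complex.Im R).

Definition cdot (a b : R[i]) : R := Re a * Re b + Im a * Im b.
Definition cnorm2 (a : R[i]) : R := Re a * Re a + Im a * Im a.

Lemma cnorm2_ge0 a : 0 <= cnorm2 a.
Proof. by rewrite /cnorm2; nra. Qed.

Lemma cdot_mul (a b t : R[i]) : cdot a (b * t)%ring =
  Re a * (Re b * Re t - Im b * Im t) + Im a * (Re b * Im t + Im b * Re t).
Proof. by case: a => [ar ai]; case: b => [br bi]; case: t => [tr ti]. Qed.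

Lemma cdot_mul_le (a b t : R[i]) :
  cdot a (b * t)%ring <= (Rabs (Re t) + Rabs (Im t)) * (cnorm2 a + cnorm2 b) / 2.
Proof.
rewrite cdot_mul /cnorm2.
have h1 := mul_le_abs_sumsq (Re a) (Re b) (Re t).
have h2 := mul_le_abs_sumsq (Re a) (Im b) (- Im t).
have h3 := mul_le_abs_sumsq (Im a) (Re b) (Im t).
have h4 := mul_le_abs_sumsq (Im a) (Im b) (Re t).
by rewrite Rabs_Ropp in h2; lra.
Qed.

Lemma cdot_mulr (a b : R[i]) (r : R) : cdot a (b * r&C)%ring = r * cdot a b.
Proof.
case: a => [ar ai]; case: b => [br bi]; rewrite /cdot /=.
by change ((ar * (br * r - bi * 0) + ai * (br * 0 + bi * r))%R = r * (ar * br + ai * bi)); ring.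
Qed.

Lemma cdot_self (a t : R[i]) : cdot a (a * t)%ring = Re t * cnorm2 a.
Proof. by rewrite cdot_mul /cnorm2; ring. Qed.

Lemma cdot0 (a : R[i]) : cdot a 0%ring = 0.
Proof. by rewrite /cdot /=; change (Re a * 0 + Im a * 0 = 0); ring. Qed.

Lemma cdot_sum {n} (a : R[i]) (F : 'I_n -> R[i]) :
  cdot a (\sum_(i < n) F i)%ring = \big[Rplus/R0]_(i < n) cdot a (F i).
Proof. by rewrite /cdot !raddf_sum -!sumR_distr -big_split. Qed.
End ComplexDot.

Lemma Rdiv_le_of_le_mul a b c : 0 < b -> a <= c * b -> a / b <= c.
Proof. by move=> hb h; apply: (Rmult_le_reg_r b) => //; rewrite /Rdiv Rmult_assoc Rinv_l; lra. Qed.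

(* Diagonal rescaling of a triangular matrix whose diagonal has real parts [<= - al]:
   scaling coordinate [i] by [eps ^- i] multiplies the entry [T i j] ([j < i]) by
   [eps ^ (i - j) <= eps], so for small [eps] the off-diagonal part is dominated. *)
Section TriangularScaling.
Context {n : nat} (T : 'M[R[i]]_n) (al : R).
Hypothesis Ttrig : is_trig_mx T.
Hypothesis al_gt0 : 0 < al.
Hypothesis al_le1 : al <= 1.
Hypothesis Tdiag : forall j, complex.Re (T j j) <= - al.

Definition entry_size i j := Rabs (complex.Re (T i j)) + Rabs (complex.Im (T i j)).
Definition total_size := \big[Rplus/R0]_(i < n) \big[Rplus/R0]_(j < n) entry_size i j.
Definition scale_eps := al / (2 * (1 + total_size * INR n)).
Definition scale (i : 'I_n) : R := / (scale_eps ^ i).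

Lemma entry_size_ge0 i j : 0 <= entry_size i j.
Proof.
rewrite /entry_size; have := Rabs_pos (complex.Re (T i j)).
by have := Rabs_pos (complex.Im (T i j)); lra.
Qed.

Lemma total_size_ge0 : 0 <= total_size.
Proof. by apply: sumR_ge0 => i; apply: sumR_ge0 => j; exact: entry_size_ge0. Qed.

Lemma entry_size_le i j : entry_size i j <= total_size.
Proof.
apply: (Rle_trans _ (\big[Rplus/R0]_(j < n) entry_size i j)).
  exact: (sumR_ge_term (fun l => entry_size i l) j (fun l => entry_size_ge0 i l)).
apply: (sumR_ge_term (fun k => \big[Rplus/R0]_(l < n) entry_size k l) i) => k.
by apply: sumR_ge0 => l; exact: entry_size_ge0.
Qed.

Lemma scale_eps_gt0 : 0 < scale_eps.
Proof.
have := Rmult_le_pos _ _ total_size_ge0 (pos_INR n).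
by rewrite /scale_eps => h; apply: Rdiv_lt_0_compat; lra.
Qed.

Lemma scale_eps_le1 : scale_eps <= 1.
Proof.
have := Rmult_le_pos _ _ total_size_ge0 (pos_INR n).
by rewrite /scale_eps => h; apply: Rdiv_le_of_le_mul; lra.
Qed.

Lemma scale_eps_total : scale_eps * total_size * INR n <= al / 2.
Proof.
have h := Rmult_le_pos _ _ total_size_ge0 (pos_INR n).
have -> : scale_eps * total_size * INR n =
    (al / 2) * (total_size * INR n / (1 + total_size * INR n)).
  by rewrite /scale_eps; field; lra.
rewrite -{2}(Rmult_1_r (al / 2)); apply: Rmult_le_compat_l; first lra.
apply: Rdiv_le_of_le_mul; lra.
Qed.

Lemma scale_gt0 i : 0 < scale i.
Proof. by apply/Rinv_0_lt_compat/pow_lt; exact: scale_eps_gt0. Qed.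

Lemma scale_ratio (i j : 'I_n) : (j < i)%nat -> 0 <= scale j / scale i <= scale_eps.
Proof.
move=> lt_ji; have he := scale_eps_gt0.
have -> : scale j / scale i = scale_eps ^ (i - j)%nat.
  rewrite /scale; have -> : (i : nat) = ((i - j) + j)%nat by rewrite subnK // ltnW.
  by rewrite pow_add addnK; field; split; apply: pow_nonzero; lra.
split; first by apply: pow_le; lra.
have -> : (i - j)%nat = (i - j).-1.+1 by rewrite prednK // subn_gt0.
change (scale_eps * scale_eps ^ (i - j).-1 <= scale_eps).
apply: (Rle_trans _ (scale_eps * 1)); last lra.
apply: Rmult_le_compat_l; first lra.
by rewrite -(pow1 (i - j).-1); apply: pow_incr; have := scale_eps_le1; lra.
Qed.

Lemma scaled_entry_le (w : 'I_n -> R[i]) i j :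
  scale j / scale i * cdot (w j) (w i * T i j)%ring <=
  (if i == j then - al * cnorm2 (w j) else 0)
    + scale_eps * total_size * (cnorm2 (w i) + cnorm2 (w j)) / 2.
Proof.
have hNi := cnorm2_ge0 (w i); have hNj := cnorm2_ge0 (w j).
have hK := total_size_ge0; have he := scale_eps_gt0.
set B := total_size * (cnorm2 (w i) + cnorm2 (w j)) / 2.
have hB0 : 0 <= B by rewrite /B; apply: Rmult_le_pos; [apply: Rmult_le_pos; lra | lra].
have -> : scale_eps * total_size * (cnorm2 (w i) + cnorm2 (w j)) / 2 = scale_eps * B
  by rewrite /B /Rdiv; ring.
case: (ltngtP i j) => [lt_ij | lt_ji | eq_ij].
- have -> : T i j = 0%ring by move/is_trig_mxP: Ttrig; apply.
  rewrite mulr0 cdot0 (_ : (i == j) = false); last by apply/negbTE; rewrite neq_ltn lt_ij.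
  by have := Rmult_le_pos _ _ (Rlt_le _ _ he) hB0; lra.
- rewrite (_ : (i == j) = false); last by apply/negbTE; rewrite neq_ltn lt_ji orbT.
  have [e0 e1] := scale_ratio i j lt_ji.
  have hB : cdot (w j) (w i * T i j)%ring <= B.
    apply: (Rle_trans _ _ _ (cdot_mul_le _ _ _)); rewrite /B.
    apply: Rmult_le_compat_r; first lra.
    rewrite [cnorm2 (w j) + _]Rplus_comm; apply: Rmult_le_compat_r; first lra.
    exact: entry_size_le.
  apply: (Rle_trans _ (scale j / scale i * B)); first exact: Rmult_le_compat_l.
  by have := Rmult_le_compat_r _ _ _ hB0 e1; lra.
- have ij : i = j by apply: val_inj.
  subst i; rewrite eqxx cdot_self.
  have -> : scale j / scale j = 1 by rewrite /Rdiv Rinv_r //; have := scale_gt0 j; lra.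
  have : complex.Re (T j j) * cnorm2 (w j) <= - al * cnorm2 (w j).
    exact: Rmult_le_compat_r (Tdiag j).
  by have := Rmult_le_pos _ _ (Rlt_le _ _ he) hB0; lra.
Qed.

Lemma scaled_trig_dissipative (z : 'rV[R[i]]_n) :
  \big[Rplus/R0]_(j < n) cdot (z ord0 j * (scale j)&C)%ring ((z *m T) ord0 j * (scale j)&C)%ring
   <= - (al / 2) * \big[Rplus/R0]_(j < n) cnorm2 (z ord0 j * (scale j)&C)%ring.
Proof.
set w := fun j => (z ord0 j * (scale j)&C)%ring.
have expand j : cdot (w j) ((z *m T) ord0 j * (scale j)&C)%ring =
    \big[Rplus/R0]_(i < n) (scale j / scale i * cdot (w j) (w i * T i j)%ring).
  have -> : ((z *m T) ord0 j * (scale j)&C)%ring =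
      (\sum_i w i * (T i j * (scale j / scale i)&C))%ring.
    rewrite mxE mulr_suml; apply: eq_bigr => i _.
    rewrite /w -!mulrA; congr (_ * _)%ring; rewrite mulrCA rc_mul; congr (_ * _)%ring.
    congr Complex; change (scale j = scale i * (scale j / scale i)).
    by have := scale_gt0 i => h; field; lra.
  by rewrite cdot_sum; apply: eq_bigr => i _; rewrite mulrA cdot_mulr.
rewrite (eq_bigr _ (fun j _ => expand j)).
apply: (Rle_trans _ (\big[Rplus/R0]_(j < n) \big[Rplus/R0]_(i < n)
   ((if i == j then - al * cnorm2 (w j) else 0)
     + scale_eps * total_size * (cnorm2 (w i) + cnorm2 (w j)) / 2))).
  by apply: sumR_le => j; apply: sumR_le => i; exact: scaled_entry_le.
set S := \big[Rplus/R0]_(j < n) cnorm2 (w j).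
have hS : 0 <= S by apply: sumR_ge0 => j; exact: cnorm2_ge0.
have inner j : \big[Rplus/R0]_(i < n)
   ((if i == j then - al * cnorm2 (w j) else 0)
     + scale_eps * total_size * (cnorm2 (w i) + cnorm2 (w j)) / 2)
   = - al * cnorm2 (w j) + (scale_eps * total_size / 2) * (S + INR n * cnorm2 (w j)).
  rewrite big_split /= -big_mkcond big_pred1_eq.
  rewrite (eq_bigr (fun i => (scale_eps * total_size / 2) * (cnorm2 (w i) + cnorm2 (w j))));
    last by move=> i _; rewrite /Rdiv; ring.
  by rewrite sumR_distr big_split sumR_const.
rewrite (eq_bigr _ (fun j _ => inner j)) big_split /= !sumR_distr.
rewrite [\big[_/_]_(_ < _) (S + _)]big_split /= sumR_const sumR_distr -/S.
have := scale_eps_total; have := pos_INR n => hn hek.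
have : scale_eps * total_size * INR n * S <= al / 2 * S by apply: Rmult_le_compat_r.
lra.
Qed.
End TriangularScaling.

(** * Quadratic Lyapunov functions *)

(* [qform Wr Wi y] is the squared Euclidean norm of the complex row vector [y (Wr + i Wi)],
   and [qdot] the associated real inner product. *)
Definition qform {n} (Wr Wi : mat n) (y : vec n) : R :=
  \big[Rplus/R0]_(j < n) (lin Wr y j * lin Wr y j + lin Wi y j * lin Wi y j).
Definition qdot {n} (Wr Wi : mat n) (y v : vec n) : R :=
  \big[Rplus/R0]_(j < n) (lin Wr y j * lin Wr v j + lin Wi y j * lin Wi v j).

Lemma qform_ge0 {n} (Wr Wi : mat n) y : 0 <= qform Wr Wi y.
Proof. by apply: sumR_ge0 => j; nra. Qed.

Lemma qform_sq {n} (Wr Wi : mat n) y : qform Wr Wi y = sq (lin Wr y) + sq (lin Wi y).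
Proof. exact: big_split. Qed.

Definition quadratic_lyapunov {n} (A : mat n) (be K : R) (Wr Wi : mat n) : Prop :=
  (forall y, sq y <= K * qform Wr Wi y) /\ (forall y, qform Wr Wi y <= K * sq y) /\
  (forall y, qdot Wr Wi y (mulmv A y) <= - be * qform Wr Wi y).

Lemma quadratic_lyapunov_weaken {n} {A : mat n} {be K be' K' Wr Wi} :
  be' <= be -> K <= K' -> 0 <= K ->
  quadratic_lyapunov A be K Wr Wi -> quadratic_lyapunov A be' K' Wr Wi.
Proof.
move=> hbe hK hK0 [Hlo [Hup Hd]]; split; [|split] => y.
- have := Hlo y; have := qform_ge0 Wr Wi y; nra.
- have := Hup y; have := sq_ge0 y; nra.
- have := Hd y; have := qform_ge0 Wr Wi y; nra.
Qed.

Section RealCoordinates.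
Local Notation C := (R[i]).
Local Notation Re := (@complex.Re R).
Local Notation Im := (@complex.Im R).
Local Open Scope ring_scope.

Definition crow {n} (y : vec n) : 'rV[C]_n := \row_i (y i)&C.
Definition re_mx {n} (W : 'M[C]_n) : mat n := fun i j => Re (W i j).
Definition im_mx {n} (W : 'M[C]_n) : mat n := fun i j => Im (W i j).

Lemma lin_re_mx {n} (W : 'M[C]_n) (y : vec n) j : lin (re_mx W) y j = Re ((crow y *m W) 0 j).
Proof. by rewrite /lin mxE raddf_sum /=; apply: eq_bigr => i _; rewrite mxE Re_mulCr. Qed.

Lemma lin_im_mx {n} (W : 'M[C]_n) (y : vec n) j : lin (im_mx W) y j = Im ((crow y *m W) 0 j).
Proof. by rewrite /lin mxE raddf_sum /=; apply: eq_bigr => i _; rewrite mxE Im_mulCr. Qed.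

Lemma crow_mulmv {n} (A : mat n) (y : vec n) : crow (mulmv A y) = crow y *m cmxT A.
Proof.
apply/rowP => j; rewrite !mxE /mulmv rc_sum; apply: eq_bigr => i _.
by rewrite !mxE rc_mul; congr Complex; rewrite /= mulrC.
Qed.

Lemma qform_crow {n} (W : 'M[C]_n) (y : vec n) :
  qform (re_mx W) (im_mx W) y = \big[Rplus/R0]_(j < n) cnorm2 ((crow y *m W) 0 j).
Proof. by apply: eq_bigr => j _; rewrite lin_re_mx lin_im_mx. Qed.

Lemma qdot_crow {n} (W : 'M[C]_n) (y v : vec n) : qdot (re_mx W) (im_mx W) y v =
  \big[Rplus/R0]_(j < n) cdot ((crow y *m W) 0 j) ((crow v *m W) 0 j).
Proof. by apply: eq_bigr => j _; rewrite !lin_re_mx !lin_im_mx. Qed.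

Lemma lin_inv_re_im {n} (W : 'M[C]_n) (y : vec n) : W \in unitmx ->
  y = (fun i => lin (re_mx (invmx W)) (lin (re_mx W) y) i
                + lin (fun j i => - Im (invmx W j i)) (lin (im_mx W) y) i).
Proof.
move=> Wu; apply: functional_extensionality => i.
have -> : y i = Re ((crow y *m W *m invmx W) 0 i) by rewrite -mulmxA mulmxV // mulmx1 mxE.
rewrite mxE raddf_sum -big_split; apply: eq_bigr => j _ /=.
rewrite lin_re_mx lin_im_mx /re_mx.
case: ((crow y *m W) 0 j) => a b; case: (invmx W j i) => c e /=.
by change (a * c - b * e = a * c + b * - e)%R; ring.
Qed.
End RealCoordinates.

Lemma qform_equiv_sq {n} (W : 'M[R[i]]_n) : W \in unitmx -> exists K, 0 < K /\
  forall y, sq y <= K * qform (re_mx W) (im_mx W) y /\ qform (re_mx W) (im_mx W) y <= K * sq y.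
Proof.
move=> Wu.
have [K1 [K1p HK1]] := sq_lin_le (re_mx W).
have [K2 [K2p HK2]] := sq_lin_le (im_mx W).
have [K3 [K3p HK3]] := sq_lin2_le (re_mx (invmx W)) (fun j i => - complex.Im (invmx W j i)).
exists (K1 + K2 + K3); split; first lra.
move=> y; have hq := qform_ge0 (re_mx W) (im_mx W) y; have hs := sq_ge0 y.
split.
- have := HK3 (lin (re_mx W) y) (lin (im_mx W) y).
  rewrite -(lin_inv_re_im W y Wu) -qform_sq; nra.
- by rewrite qform_sq; have := HK1 y; have := HK2 y; nra.
Qed.

Lemma hurwitz_dissipative_coordinates {n} (A : mat n) : hurwitz A ->
  exists be (W : 'M[R[i]]_n), 0 < be /\ W \in unitmx /\ forall z : 'rV[R[i]]_n,
    \big[Rplus/R0]_(j < n) cdot ((z *m W)%ring ord0 j) ((z *m cmxT A *m W)%ring ord0 j)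
      <= - be * \big[Rplus/R0]_(j < n) cnorm2 ((z *m W)%ring ord0 j).
Proof.
move=> H; have [P Pu [Ttrig Tneg]] := hurwitz_schur _ H.
set T := (P *m cmxT A *m invmx P)%ring in Ttrig Tneg.
have Tneg' j : 0 < - complex.Re (T j j).
  by apply: Ropp_0_gt_lt_contravar; apply/RltP; exact: Tneg.
have [al0 [hal0 Hal0]] := exists_pos_lower_bound _ Tneg'.
pose al := Rmin al0 1.
have hal : 0 < al by apply: Rmin_pos; lra.
have Tdiag j : complex.Re (T j j) <= - al by have := Hal0 j; have := Rmin_l al0 1; rewrite /al; lra.
pose d := scale T al.
have dpos j : 0 < d j := scale_gt0 T al hal j.
pose D : 'M[R[i]]_n := diag_mx (\row_j (d j)&C).
pose D' : 'M[R[i]]_n := diag_mx (\row_j (/ d j)&C).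
have DD' : (D *m D')%ring = 1%:M%ring.
  rewrite mulmx_diag -diag_const_mx; congr diag_mx; apply/rowP => j.
  by rewrite !mxE rc_mul; congr Complex; apply: Rinv_r; have := dpos j; lra.
exists (al / 2), (invmx P *m D)%ring; split; first lra; split.
  have WW : (invmx P *m D *m (D' *m P) = 1%:M)%ring.
    by rewrite mulmxA -(mulmxA (invmx P)) DD' mulmx1 mulVmx.
  exact: (mulmx1_unit WW).1.
move=> z; pose z' := (z *m invmx P)%ring.
have Ew j : ((z *m (invmx P *m D)) ord0 j = z' ord0 j * (d j)&C)%ring.
  by rewrite mulmxA mul_mx_diag !mxE.
have Ev j : ((z *m cmxT A *m (invmx P *m D)) ord0 j = (z' *m T) ord0 j * (d j)&C)%ring.
  have -> : (z *m cmxT A *m (invmx P *m D) = z' *m T *m D)%ring.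
    by rewrite /z' /T !mulmxA; congr (_ *m _)%ring; rewrite -!mulmxA mulKmx // mulmxA.
  by rewrite mul_mx_diag !mxE.
rewrite (eq_bigr _ (fun j _ => congr2 cdot (Ew j) (Ev j))).
rewrite (eq_bigr _ (fun j _ => congr1 cnorm2 (Ew j))).
exact: (scaled_trig_dissipative _ _ Ttrig hal (Rmin_r al0 1) Tdiag z').
Qed.

Lemma hurwitz_lyapunov {n} (A : mat n) : hurwitz A ->
  exists be K Wr Wi, 0 < be /\ 0 < K /\ quadratic_lyapunov A be K Wr Wi.
Proof.
move=> H; have [be [W [hbe [Wu Hd]]]] := hurwitz_dissipative_coordinates A H.
have [K [hK HK]] := qform_equiv_sq W Wu.
exists be, K, (re_mx W), (im_mx W); do 2!split => //; split; [|split] => y.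
- exact: (HK y).1.
- exact: (HK y).2.
- by rewrite qdot_crow qform_crow crow_mulmv; exact: Hd.
Qed.

(** * Equivalence with the Euclidean norm *)

Lemma eventually_forall_fin n (P : 'I_n -> nat -> Prop) :
  (forall i, exists N, forall m, (N <= m)%nat -> P i m) ->
  exists N, forall m, (N <= m)%nat -> forall i, P i m.
Proof.
move=> /choice [N HN]; exists (\max_(i < n) N i) => m hm i.
by apply: HN; exact: leq_trans (leq_bigmax i) hm.
Qed.

Lemma inv_succ_gt0 m : 0 < / INR m.+1.
Proof. by apply/Rinv_0_lt_compat/lt_0_INR; lia. Qed.

Lemma inv_succ_le {N m} : (N <= m)%nat -> / INR m.+1 <= / INR N.+1.
Proof. by move=> /leP h; apply: Rinv_le_contravar; [apply: lt_0_INR | apply: le_INR]; lia. Qed.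

Section Norm.
Context {n : nat} {nrm : vec n -> R}.
Hypothesis Hn : is_norm nrm.

Lemma nrm_ge0 x : 0 <= nrm x. Proof. by case: Hn => h _; exact: h. Qed.

Lemma nrm_scal a x : nrm (fun i => a * x i) = Rabs a * nrm x.
Proof. by case: Hn => _ [_ [h _]]; exact: h. Qed.

Lemma nrm_tri x y : nrm (fun i => x i + y i) <= nrm x + nrm y.
Proof. by case: Hn => _ [_ [_ h]]; exact: h. Qed.

Lemma nrm_eq0 x : nrm x = 0 -> forall i, x i = 0.
Proof. by case: Hn => _ [h _]; exact: h. Qed.

Lemma nrm0 : nrm (fun _ => 0) = 0.
Proof.
have -> : (fun _ : 'I_n => 0) = (fun i => 0 * (fun _ => 0) i).
  by apply: functional_extensionality => i /=; ring.
by rewrite nrm_scal Rabs_R0; ring.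
Qed.

Lemma nrm_subC x y : nrm (fun i => x i - y i) = nrm (fun i => y i - x i).
Proof.
have -> : (fun i => x i - y i) = (fun i => -1 * (fun i => y i - x i) i).
  by apply: functional_extensionality => i /=; ring.
by rewrite nrm_scal Rabs_Ropp Rabs_R1; ring.
Qed.

Lemma nrm_sub_tri x y z :
  nrm (fun i => x i - z i) <= nrm (fun i => x i - y i) + nrm (fun i => y i - z i).
Proof.
have -> : (fun i => x i - z i) = (fun i => (fun i => x i - y i) i + (fun i => y i - z i) i).
  by apply: functional_extensionality => i /=; ring.
exact: nrm_tri.
Qed.

Lemma nrm_sum m (F : 'I_m -> vec n) :
  nrm (fun k => \big[Rplus/R0]_(i < m) F i k) <= \big[Rplus/R0]_(i < m) nrm (F i).
Proof.
elim: m F => [|m IH] F.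
  have -> : (fun k : 'I_n => \big[Rplus/R0]_(i < 0) F i k) = (fun _ => 0).
    by apply: functional_extensionality => k; rewrite big_ord0.
  by rewrite nrm0 big_ord0; lra.
have -> : (fun k => \big[Rplus/R0]_(i < m.+1) F i k) =
    (fun k => (fun k => \big[Rplus/R0]_(i < m) F (widen_ord (leqnSn m) i) k) k + F ord_max k).
  by apply: functional_extensionality => k; rewrite big_ord_recr.
rewrite big_ord_recr /=; apply: (Rle_trans _ _ _ (nrm_tri _ _)).
by apply: Rplus_le_compat_r; exact: (IH (fun i => F (widen_ord (leqnSn m) i))).
Qed.

Definition unit_vec (j : 'I_n) : vec n := fun k => if k == j then 1 else 0.

Lemma nrm_le_coords y : nrm y <= \big[Rplus/R0]_(i < n) (Rabs (y i) * nrm (unit_vec i)).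
Proof.
have {1}-> : y = (fun k => \big[Rplus/R0]_(i < n) (fun i k => y i * unit_vec i k) i k).
  apply: functional_extensionality => k; rewrite (bigD1 k) //= big1 /unit_vec ?eqxx; first ring.
  by move=> i /negbTE; rewrite eq_sym => ->; ring.
apply: (Rle_trans _ _ _ (nrm_sum _ _)); apply: sumR_le => i; rewrite nrm_scal; lra.
Qed.

Lemma nrm_sqr_le_sq : exists C, 0 < C /\ forall y, nrm y * nrm y <= C * sq y.
Proof.
pose E := \big[Rplus/R0]_(i < n) nrm (unit_vec i).
have hE : 0 <= E by apply: sumR_ge0 => i; exact: nrm_ge0.
exists (1 + E * E); split; first nra.
move=> y; have h1 : nrm y <= sqrt (sq y) * E.
  apply: (Rle_trans _ _ _ (nrm_le_coords y)); rewrite /E -sumR_distr; apply: sumR_le => i.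
  by apply: Rmult_le_compat_r; [exact: nrm_ge0 | exact: Rabs_le_sqrt_sq].
have h0 := nrm_ge0 y; have hs := sqrt_pos (sq y); have hq := sq_ge0 y.
have : nrm y * nrm y <= (sqrt (sq y) * sqrt (sq y)) * (E * E) by nra.
by rewrite sqrt_sqrt //; nra.
Qed.

Lemma nrm_coord_cv (u : nat -> vec n) (l : vec n) :
  (forall i, Un_cv (fun m => u m i) (l i)) ->
  forall e, 0 < e -> exists N, forall m, (N <= m)%nat -> nrm (fun i => u m i - l i) < e.
Proof.
move=> hu e he; pose E := 1 + \big[Rplus/R0]_(i < n) nrm (unit_vec i).
have hS : 0 <= \big[Rplus/R0]_(i < n) nrm (unit_vec i) by apply: sumR_ge0 => i; exact: nrm_ge0.
have heE : 0 < e / E by apply: Rdiv_lt_0_compat; rewrite /E; lra.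
have [N HN] : exists N, forall m, (N <= m)%nat -> forall i, Rabs (u m i - l i) < e / E.
  apply: eventually_forall_fin => i; have [N HN] := hu i _ heE.
  by exists N => m /leP hm; exact: HN m hm.
exists N => m hm; apply: (Rle_lt_trans _ _ _ (nrm_le_coords _)).
apply: (Rle_lt_trans _ (e / E * \big[Rplus/R0]_(i < n) nrm (unit_vec i))).
  rewrite -sumR_distr; apply: sumR_le => i; apply: Rmult_le_compat_r; first exact: nrm_ge0.
  exact/Rlt_le/HN.
apply: (Rlt_le_trans _ (e / E * E)); first by apply: Rmult_lt_compat_l => //; rewrite /E; lra.
by right; field; rewrite /E; lra.
Qed.

Definition supported_below (k : nat) (y : vec n) := forall i : 'I_n, (k <= i)%nat -> y i = 0.

(* Norm equivalence [sq <= c nrm^2] is proved coordinate by coordinate, adding the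
   coordinate [k] to vectors supported on the first [k] coordinates.  The step needs that
   [unit_vec k] is at positive distance from those vectors; otherwise the induction
   hypothesis makes an approximating sequence Cauchy, and its limit equals [unit_vec k]. *)
Section SupportStep.
Variables (k : nat) (Hk : (k < n)%nat) (c : R).
Hypothesis c_gt0 : 0 < c.
Hypothesis sq_le_supported : forall y, supported_below k y -> sq y <= c * (nrm y * nrm y).
Let kk : 'I_n := Ordinal Hk.

Lemma coord_le_nrm_supported (y : vec n) i :
  supported_below k y -> Rabs (y i) <= sqrt c * nrm y.
Proof.
move=> Sy; apply: (Rle_trans _ _ _ (Rabs_le_sqrt_sq y i)).
have h := sq_le_supported y Sy; have h0 := nrm_ge0 y.
rewrite -(sqrt_Rsqr (nrm y)) // -sqrt_mult; [|lra|apply: Rle_0_sqr].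
by apply: sqrt_le_1_alt; rewrite /Rsqr.
Qed.

Lemma supported_approx_cv (v : vec n) (ws : nat -> vec n) :
  (forall m, supported_below k (ws m)) ->
  (forall m, nrm (fun i => v i - ws m i) < / INR m.+1) ->
  exists2 wl, supported_below k wl & forall i, Un_cv (fun m => ws m i) (wl i).
Proof.
move=> Sws hws.
have cauchy i : Cauchy_crit (fun m => ws m i).
  move=> eps he; have hsc : 0 < sqrt c by apply: sqrt_lt_R0.
  have [N [hN hN0]] := archimed_cor1 (eps / (2 * sqrt c)) ltac:(apply: Rdiv_lt_0_compat; lra).
  exists N => a b ha hb; rewrite /Rdist.
  have Sab : supported_below k (fun j => ws a j - ws b j).
    by move=> j hj; rewrite Sws // Sws //; ring.
  have h1 := coord_le_nrm_supported _ i Sab.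
  have h2 := nrm_sub_tri (ws a) v (ws b); rewrite (nrm_subC (ws a) v) in h2.
  have := hws a; have := hws b.
  have := inv_succ_le (introT leP ha); have := inv_succ_le (introT leP hb).
  have hNN : / INR N.+1 <= / INR N.
    by apply: Rinv_le_contravar; [exact: lt_0_INR | rewrite S_INR; lra].
  move=> hb' ha' hvb hva.
  have h3 : nrm (fun j => ws a j - ws b j) < 2 * / INR N by lra.
  have -> : eps = sqrt c * (2 * (eps / (2 * sqrt c))) by field; lra.
  by apply: (Rle_lt_trans _ _ _ h1); apply: Rmult_lt_compat_l => //; lra.
exists (fun i => proj1_sig (R_complete _ (cauchy i))) => [i hi|i].
  apply: (UL_sequence (fun m => ws m i)); last first.
    by move=> e he; exists 0%nat => m _; rewrite Sws // /Rdist Rminus_0_r Rabs_R0.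
  exact: (proj2_sig (R_complete _ (cauchy i))).
exact: (proj2_sig (R_complete _ (cauchy i))).
Qed.

Lemma dist_unit_vec_supported_pos :
  exists d, 0 < d /\ forall w, supported_below k w -> d <= nrm (fun i => unit_vec kk i - w i).
Proof.
apply: NNPP => Hno.
have Hall m : exists w, supported_below k w /\ nrm (fun i => unit_vec kk i - w i) < / INR m.+1.
  apply: NNPP => h; apply: Hno; exists (/ INR m.+1); split; first exact: inv_succ_gt0.
  by move=> w Sw; apply: Rnot_lt_le => hl; apply: h; exists w.
have [ws Hws] := choice _ Hall.
have Sws m := (Hws m).1; have hws m := (Hws m).2.
have [wl Swl hwl] := supported_approx_cv _ _ Sws hws.
have zero : nrm (fun i => unit_vec kk i - wl i) = 0.
  apply: Rle_antisym; last exact: nrm_ge0.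
  apply: le_epsilon => e he; rewrite Rplus_0_l.
  have [N1 HN1] := nrm_coord_cv _ _ hwl (e / 2) ltac:(lra).
  have [N2 [hN2 hN20]] := archimed_cor1 (e / 2) ltac:(lra).
  pose m := maxn N1 N2.
  have h1 := nrm_sub_tri (unit_vec kk) (ws m) wl.
  have h2 := HN1 m (leq_maxl _ _); have h3 := hws m.
  have h4 : / INR m.+1 <= / INR N2.
    apply: Rinv_le_contravar; first exact: lt_0_INR.
    by apply: le_INR; have /leP := leq_maxr N1 N2; lia.
  lra.
by have := nrm_eq0 _ zero kk; rewrite /unit_vec eqxx Swl //=; lra.
Qed.

Lemma supported_succ_split y : supported_below k.+1 y -> exists2 w, supported_below k w &
  y = (fun i => w i + y kk * unit_vec kk i) /\ sq y = sq w + y kk * y kk.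
Proof.
move=> Sy; exists (fun i => if i == kk then 0 else y i).
  move=> i hi; case: eqP => // ne; apply: Sy.
  have ne' : (i : nat) != k by apply/eqP => h; apply: ne; apply: val_inj.
  by rewrite ltn_neqAle eq_sym ne' hi.
split.
  by apply: functional_extensionality => i; rewrite /unit_vec; case: eqP => [-> | _]; ring.
rewrite /sq (bigD1 kk) //= [in RHS](bigD1 kk) //= eqxx Rmult_0_l Rplus_0_l Rplus_comm.
by congr (_ + _); apply: eq_bigr => i /negbTE ->.
Qed.

Lemma sq_le_nrm_supported_succ :
  exists c', 0 < c' /\ forall y, supported_below k.+1 y -> sq y <= c' * (nrm y * nrm y).
Proof.
have [d [hd Hd]] := dist_unit_vec_supported_pos.
pose E := nrm (unit_vec kk); have hE : 0 <= E := nrm_ge0 (unit_vec kk).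
have hEd : 0 <= E / d by apply: Rmult_le_pos => //; apply/Rlt_le/Rinv_0_lt_compat.
have hd' : 0 < / d := Rinv_0_lt_compat _ hd.
exists (c * ((1 + E / d) * (1 + E / d)) + / d * / d); split.
  have := Rmult_lt_0_compat _ _ hd' hd'.
  by have := Rmult_le_pos _ _ (Rlt_le _ _ c_gt0) (Rle_0_sqr (1 + E / d)); rewrite /Rsqr; lra.
move=> y Sy; have [w Sw [ey hsq]] := supported_succ_split y Sy.
set t := y kk in ey hsq; have hN := nrm_ge0 y; have hw0 := nrm_ge0 w.
have ha : Rabs t * d <= nrm y.
  case: (Req_dec t 0) => [-> | tn0]; first by rewrite Rabs_R0; lra.
  have Sw' : supported_below k (fun i => - / t * w i) by move=> i hi; rewrite Sw //; ring.
  have -> : y = (fun i => t * (fun i => unit_vec kk i - - / t * w i) i).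
    by rewrite {1}ey; apply: functional_extensionality => i /=; field.
  by rewrite nrm_scal; apply: Rmult_le_compat_l; [exact: Rabs_pos | exact: Hd].
have hw : nrm w <= nrm y + Rabs t * E.
  have -> : w = (fun i => y i + (fun i => (- t) * unit_vec kk i) i).
    by rewrite ey; apply: functional_extensionality => i /=; ring.
  by apply: (Rle_trans _ _ _ (nrm_tri _ _)); rewrite nrm_scal Rabs_Ropp /E; lra.
have had : Rabs t <= nrm y / d.
  by apply: (Rmult_le_reg_r d) => //; rewrite /Rdiv Rmult_assoc Rinv_l; lra.
have hw2 : nrm w <= nrm y * (1 + E / d).
  have := Rmult_le_compat_r _ _ _ hE had; rewrite /Rdiv in hEd |- *; lra.
have ht2 : t * t <= (nrm y / d) * (nrm y / d).
  by rewrite [t * t](Rsqr_abs t) /Rsqr; apply: Rmult_le_compat => //; exact: Rabs_pos.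
have := sq_le_supported w Sw; have := Rmult_le_compat _ _ _ _ hw0 hw0 hw2 hw2.
rewrite hsq /Rdiv in ht2 hw2 |- *; nra.
Qed.
End SupportStep.

Lemma sq_le_nrm_sqr : exists c, 0 < c /\ forall y, sq y <= c * (nrm y * nrm y).
Proof.
have gen k : (k <= n)%nat ->
    exists c, 0 < c /\ forall y, supported_below k y -> sq y <= c * (nrm y * nrm y).
  elim: k => [_|k IHk hk].
    exists 1; split => [|y Sy]; first lra.
    rewrite /sq big1 => [|i _]; last by rewrite Sy //; ring.
    by apply: Rmult_le_pos; [lra | apply: Rle_0_sqr].
  have [c [hc H]] := IHk (ltnW hk).
  exact: (sq_le_nrm_supported_succ k hk c hc H).
have [c [hc H]] := gen n (leqnn n).
exists c; split => // y; apply: H => i hi.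
by have := ltn_ord i; rewrite ltnNge hi.
Qed.
End Norm.

(** * Decay between switches *)

Lemma derivable_pt_lim_exp_lin k t : derivable_pt_lim (fun s => exp (k * s)) t (k * exp (k * t)).
Proof.
have h : derivable_pt_lim (fun s => k * s) t k.
  by have := derivable_pt_lim_scal id k t 1 (derivable_pt_lim_id t); rewrite Rmult_1_r.
by rewrite Rmult_comm; exact: (derivable_pt_lim_comp _ exp _ _ _ h (derivable_pt_lim_exp (k * t))).
Qed.

Lemma continuity_pt_exp_lin k t : continuity_pt (fun s => exp (k * s)) t.
Proof.
by apply: derivable_continuous_pt; exists (k * exp (k * t)); exact: derivable_pt_lim_exp_lin.
Qed.

Lemma derivable_pt_lim_sumR {n} (F : 'I_n -> R -> R) (dF : 'I_n -> R) t :
  (forall i, derivable_pt_lim (F i) t (dF i)) ->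
  derivable_pt_lim (fun s => \big[Rplus/R0]_(i < n) F i s) t (\big[Rplus/R0]_(i < n) dF i).
Proof.
elim: n F dF => [|n IH] F dF H.
  have -> : (fun s => \big[Rplus/R0]_(i < 0) F i s) = (fun _ => 0).
    by apply: functional_extensionality => s; rewrite big_ord0.
  by rewrite big_ord0; exact: derivable_pt_lim_const.
have -> : (fun s => \big[Rplus/R0]_(i < n.+1) F i s) =
    (fun s => \big[Rplus/R0]_(i < n) F (widen_ord (leqnSn n) i) s + F ord_max s).
  by apply: functional_extensionality => s; rewrite big_ord_recr.
rewrite big_ord_recr /=; apply: derivable_pt_lim_plus; last exact: H.
exact: (IH (fun i => F (widen_ord (leqnSn n) i)) (fun i => dF (widen_ord (leqnSn n) i))).
Qed.

Lemma continuity_pt_sumR {n} (F : 'I_n -> R -> R) t :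
  (forall i, continuity_pt (F i) t) -> continuity_pt (fun s => \big[Rplus/R0]_(i < n) F i s) t.
Proof.
elim: n F => [|n IH] F H.
  have -> : (fun s => \big[Rplus/R0]_(i < 0) F i s) = (fun _ => 0).
    by apply: functional_extensionality => s; rewrite big_ord0.
  exact: continuity_pt_const.
have -> : (fun s => \big[Rplus/R0]_(i < n.+1) F i s) =
    (fun s => \big[Rplus/R0]_(i < n) F (widen_ord (leqnSn n) i) s + F ord_max s).
  by apply: functional_extensionality => s; rewrite big_ord_recr.
apply: continuity_pt_plus; last exact: H.
exact: (IH (fun i => F (widen_ord (leqnSn n) i))).
Qed.

Lemma derivable_pt_lim_locally_eq f g t l d : 0 < d ->
  (forall s, Rabs (s - t) < d -> f s = g s) -> derivable_pt_lim f t l -> derivable_pt_lim g t l.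
Proof.
move=> hd he hf eps heps; have [del hdel] := hf eps heps.
have hdp : 0 < Rmin del d by apply: Rmin_pos => //; exact: (cond_pos del).
exists (mkposreal _ hdp) => h hh0 hh /=.
have hhd : Rabs h < d by apply: (Rlt_le_trans _ _ _ hh); exact: Rmin_r.
rewrite -!he; first apply: hdel => //.
- by apply: (Rlt_le_trans _ _ _ hh); exact: Rmin_l.
- by rewrite Rminus_diag Rabs_R0.
- by have -> : t + h - t = h by ring.
Qed.

Lemma nonincreasing_of_deriv_nonpos (F F' : R -> R) a b : a < b ->
  (forall c, a < c < b -> derivable_pt_lim F c (F' c)) ->
  (forall c, a < c < b -> F' c <= 0) ->
  (forall c, a <= c <= b -> continuity_pt F c) -> F b <= F a.
Proof.
move=> hab hd hn hc.
have [c [P e]] := MVT F id a b (fun c h => exist _ (F' c) (hd c h))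
  (fun c _ => derivable_pt_id c) hab hc
  (fun c _ => derivable_continuous_pt _ _ (derivable_pt_id c)).
rewrite derive_pt_id /= in e; rewrite /id in e; have := hn c P; nra.
Qed.

Lemma lin_scal {n m} (W : 'I_n -> 'I_m -> R) (v : 'I_n -> R) c j :
  lin W (fun i => c * v i) j = c * lin W v j.
Proof. by rewrite /lin -sumR_distr; apply: eq_bigr => i _; ring. Qed.

Lemma qdot_scal {n} (Wr Wi : mat n) y v c : qdot Wr Wi y (fun i => c * v i) = c * qdot Wr Wi y v.
Proof. by rewrite /qdot -sumR_distr; apply: eq_bigr => j _; rewrite !lin_scal; ring. Qed.

Lemma derivable_pt_lim_lin {n} (W : mat n) (X : R -> vec n) (X' : vec n) t j :
  (forall i, derivable_pt_lim (fun s => X s i) t (X' i)) ->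
  derivable_pt_lim (fun s => lin W (X s) j) t (lin W X' j).
Proof.
move=> H.
have -> : lin W X' j = \big[Rplus/R0]_(i < n) (X' i * W i j + X t i * 0)
  by apply: eq_bigr => i _; ring.
apply: (derivable_pt_lim_sumR (fun i s => X s i * W i j)) => i.
exact: derivable_pt_lim_mult (H i) (derivable_pt_lim_const _ _).
Qed.

Lemma derivable_pt_lim_qform {n} (Wr Wi : mat n) (X : R -> vec n) (X' : vec n) t :
  (forall i, derivable_pt_lim (fun s => X s i) t (X' i)) ->
  derivable_pt_lim (fun s => qform Wr Wi (X s)) t (2 * qdot Wr Wi (X t) X').
Proof.
move=> H.
have -> : 2 * qdot Wr Wi (X t) X' = \big[Rplus/R0]_(j < n)
    ((lin Wr X' j * lin Wr (X t) j + lin Wr (X t) j * lin Wr X' j)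
     + (lin Wi X' j * lin Wi (X t) j + lin Wi (X t) j * lin Wi X' j)).
  by rewrite /qdot -sumR_distr; apply: eq_bigr => j _; ring.
apply: (derivable_pt_lim_sumR
  (fun j s => lin Wr (X s) j * lin Wr (X s) j + lin Wi (X s) j * lin Wi (X s) j)) => j.
by apply: derivable_pt_lim_plus; apply: derivable_pt_lim_mult; exact: derivable_pt_lim_lin.
Qed.

Lemma continuity_pt_qform {n} (Wr Wi : mat n) (X : R -> vec n) t :
  (forall i, continuity_pt (fun s => X s i) t) -> continuity_pt (fun s => qform Wr Wi (X s)) t.
Proof.
move=> H; have hl W j : continuity_pt (fun s => lin W (X s) j) t.
  apply: (continuity_pt_sumR (fun i s => X s i * W i j)) => i.
  by apply: continuity_pt_mult => //; exact: continuity_pt_const.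
apply: (continuity_pt_sumR
  (fun j s => lin Wr (X s) j * lin Wr (X s) j + lin Wi (X s) j * lin Wi (X s) j)) => j.
by apply: continuity_pt_plus; apply: continuity_pt_mult; exact: hl.
Qed.

Lemma not_discontinuity_of_const {P : Type} {sigma : R -> P} {k a b s} :
  (forall u, a < u < b -> sigma u = k) -> a < s < b -> ~ discontinuity sigma s.
Proof.
move=> hk hs [_ hnlc]; apply: hnlc.
exists (Rmin (s - a) (b - s)); split; first by apply: Rmin_pos; lra.
move=> s' _ /Rabs_def2 [h3 h4]; have := Rmin_l (s - a) (b - s); have := Rmin_r (s - a) (b - s).
by move=> h1 h2; rewrite !hk //; lra.
Qed.

(* Solutions are only continuous on [[0, oo)]; freezing them at [x 0] on the left gives
   functions that are continuous at every point of [[0, oo)], as [continuity_pt] requires. *)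
Definition clamp0 {n} (x : R -> vec n) : R -> vec n := fun s => x (Rmax 0 s).

Lemma clamp0_eq {n} (x : R -> vec n) s : 0 <= s -> clamp0 x s = x s.
Proof. by move=> h; rewrite /clamp0 Rmax_right. Qed.

Section ModeInterval.
Context {n p : nat} {M : 'I_p -> mat n} {g : R} {sigma : R -> 'I_p} {x : R -> vec n}.
Hypothesis Hsol : solution g M sigma x.

Lemma clamp0_continuous i t : 0 <= t -> continuity_pt (fun s => clamp0 x s i) t.
Proof.
move=> ht eps he; have [d [hd Hd]] := Hsol.1 i t ht eps he.
exists d; split => // s [_ hs]; move: hs; rewrite /= /R_dist /clamp0 (Rmax_right 0 t ht) => hs.
apply: Hd; first exact: Rmax_l.
case: (Rle_dec 0 s) => hs0; first by rewrite Rmax_right.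
rewrite Rmax_left; last lra.
by move: hs; rewrite Rabs_left; last lra; rewrite Rminus_0_l Rabs_Ropp Rabs_right; lra.
Qed.

Lemma clamp0_derivative t : 0 < t -> ~ discontinuity sigma t -> forall i,
  derivable_pt_lim (fun s => clamp0 x s i) t (g * mulmv (M (sigma t)) (clamp0 x t) i).
Proof.
move=> ht hnd i; rewrite clamp0_eq; last lra.
apply: (derivable_pt_lim_locally_eq (fun s => x s i) _ t _ t) => //; last exact: Hsol.2.
by move=> s /Rabs_def2 [h1 h2]; rewrite /clamp0 Rmax_right //; lra.
Qed.

Lemma qform_decay_on_mode_interval k (Wr Wi : mat n) be a b :
  0 <= g -> 0 <= a -> a < b ->
  (forall s, a < s < b -> sigma s = k) ->
  (forall y, qdot Wr Wi y (mulmv (M k) y) <= - be * qform Wr Wi y) ->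
  qform Wr Wi (x b) * exp (2 * be * g * b) <= qform Wr Wi (x a) * exp (2 * be * g * a).
Proof.
move=> hg ha hab hk hL; pose ka := 2 * be * g.
pose F s := qform Wr Wi (clamp0 x s) * exp (ka * s).
pose F' s := (2 * qdot Wr Wi (clamp0 x s) (fun i => g * mulmv (M k) (clamp0 x s) i)) * exp (ka * s)
   + qform Wr Wi (clamp0 x s) * (ka * exp (ka * s)).
suff : F b <= F a by rewrite /F /ka !clamp0_eq //; lra.
apply: (nonincreasing_of_deriv_nonpos F F' a b hab).
- move=> c hc; apply: derivable_pt_lim_mult; last exact: derivable_pt_lim_exp_lin.
  apply: derivable_pt_lim_qform => i.
  by have := clamp0_derivative c ltac:(lra) (not_discontinuity_of_const hk hc) i; rewrite hk.
- move=> c hc; rewrite /F' qdot_scal.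
  set B := qdot _ _ _ _; set q := qform _ _ _; set e := exp (ka * c).
  have he : 0 < e := exp_pos _.
  have h1 : g * B <= g * (- be * q) := Rmult_le_compat_l _ _ _ hg (hL _).
  have -> : 2 * (g * B) * e + q * (ka * e) = 2 * e * (g * B + be * g * q) by rewrite /ka; ring.
  have : g * B + be * g * q <= 0 by lra.
  nra.
- move=> c hc; apply: continuity_pt_mult; last exact: continuity_pt_exp_lin.
  by apply: continuity_pt_qform => i; apply: clamp0_continuous; lra.
Qed.
End ModeInterval.

Section PiecewiseConstant.
Context {P : Type} {sigma : R -> P}.
Hypothesis right_const : forall t, 0 <= t ->
  exists d, 0 < d /\ forall s, t <= s < t + d -> sigma s = sigma t.

Lemma constant_between_discontinuities a b : 0 <= a -> a < b ->
  (forall s, a < s < b -> ~ discontinuity sigma s) ->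
  forall s, a <= s < b -> sigma s = sigma a.
Proof.
move=> ha hab hnd.
pose E u := a <= u <= b /\ forall v, a <= v < u -> sigma v = sigma a.
have [m [mub mlub]] : {m | is_lub E m}.
  apply: completeness; first by exists b => u [[_ h] _].
  by exists a; split; [lra | move=> v hv; lra].
have ham : a <= m by apply: mub; split; [lra | move=> v hv; lra].
have hmb : m <= b by apply: mlub => u [[_ h] _].
have below v : a <= v < m -> sigma v = sigma a.
  move=> hv; apply: NNPP => hne; suff : m <= v by lra.
  by apply: mlub => u [hu Hu]; apply: Rnot_lt_le => hvu; apply: hne; apply: Hu; lra.
suff mb : m = b by move=> s hs; apply: below; lra.
apply: NNPP => hne; have hmb' : m < b by lra.
have hsm : sigma m = sigma a.
  case: (Req_dec m a) => [-> // | hma].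
  have [d [hd Hd]] : locally_constant_at sigma m.
    by apply: NNPP => hnl; apply: (hnd m); [lra | split; [lra | exact: hnl]].
  pose v := Rmax a (m - d / 2).
  have hv1 : a <= v := Rmax_l _ _; have hv2 : m - d / 2 <= v := Rmax_r _ _.
  have hv3 : v < m by rewrite /v; apply: Rmax_lub_lt; lra.
  rewrite -(below v (conj hv1 hv3)); symmetry; apply: Hd; first lra.
  by rewrite Rabs_left; lra.
have [d [hd Hd]] := right_const m ltac:(lra).
pose u := Rmin (m + d / 2) b.
have hu1 : u <= m + d / 2 := Rmin_l _ _; have hu2 : u <= b := Rmin_r _ _.
have hu3 : m < u by rewrite /u; apply: Rmin_glb_lt; lra.
suff : E u by move/mub; lra.
split; first lra.
move=> v hv; case: (Rlt_le_dec v m) => hvm; first by apply: below; lra.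
by rewrite Hd; [exact: hsm | lra].
Qed.
End PiecewiseConstant.

Lemma exists_max_in_list (L : list R) : L <> nil ->
  exists2 m, List.In m L & forall u, List.In u L -> u <= m.
Proof.
elim: L => [//|a [|b L] IH] _.
  by exists a; [left | move=> u [-> | []]; lra].
have [m hm Hm] := IH ltac:(discriminate).
case: (Rle_dec a m) => ham.
  by exists m; [right | move=> u [<- // | hu]; exact: Hm].
by exists a; [left | move=> u [<- | hu]; [lra | have := Hm u hu; lra]].
Qed.

Lemma exists_nodup_sublist (P : R -> Prop) (l : list R) :
  exists L, List.NoDup L /\ forall u, List.In u L <-> List.In u l /\ P u.
Proof.
elim: l => [|a l [L [hL HL]]].
  by exists nil; split; [constructor | move=> u; split => [[]|[[] _]]].
case: (classic (P a /\ ~ List.In a L)) => [[hPa haL] | hno].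
  exists (a :: L); split; first by constructor.
  move=> u; split.
    by case => [<- | /(HL u).1 [h1 h2]]; split => //; [left | right].
  by case => [[<- | hu] hPu]; [left | right; exact: (HL u).2].
exists L; split => // u; split.
  by move=> /(HL u).1 [h1 h2]; split => //; right.
case => [[<- | hu] hPu]; last exact: (HL u).2.
by apply: NNPP => hn; apply: hno.
Qed.

Lemma in_app_cons_neq (l1 l2 : list R) s u :
  List.In u (l1 ++ s :: l2)%list -> u <> s -> List.In u (l1 ++ l2)%list.
Proof.
by move=> /List.in_app_iff [h | [h | h]] hne; apply/List.in_app_iff; [left | case: hne | right].
Qed.

Lemma in_app_cons (l1 l2 : list R) s u :
  List.In u (l1 ++ l2)%list -> List.In u (l1 ++ s :: l2)%list.
Proof. by move=> /List.in_app_iff [h | h]; apply/List.in_app_iff; [left | right; right]. Qed.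

Definition switch_list {P : Type} (sigma : R -> P) (t : R) (L : list R) : Prop :=
  List.NoDup L /\ forall u, List.In u L <-> 0 < u < t /\ discontinuity sigma u.

Lemma exists_switch_list {p} {sigma : R -> 'I_p} {t} :
  switching_signal sigma -> 0 <= t -> exists L, switch_list sigma t L.
Proof.
move=> [_ Hfin] ht; have [l Hl] := Hfin t ht.
have [L [hL HL]] := exists_nodup_sublist (fun u => 0 < u < t /\ discontinuity sigma u) l.
exists L; split => // u; split; first by move=> /(HL u).1 [].
by move=> [h1 h2]; apply/(HL u).2; split => //; apply: Hl => //; lra.
Qed.

Lemma switch_list_length_le {p} {sigma : R -> 'I_p} {tauD N0 t L} :
  S_ave tauD N0 sigma -> 0 <= t -> switch_list sigma t L -> INR (length L) <= N0 + t / tauD.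
Proof.
move=> [_ HN] ht [hL HL]; have := HN 0 t (Rle_refl 0) ht L hL (fun u hu => (HL u).1 hu).
by rewrite Rminus_0_r.
Qed.

Lemma switch_list_remove_max {P : Type} {sigma : R -> P} {t L s} :
  switch_list sigma t L -> List.In s L -> (forall u, List.In u L -> u <= s) ->
  exists L', switch_list sigma s L' /\ length L = (length L').+1.
Proof.
move=> [hL HL] hs hmax; have [l1 [l2 eL]] := List.in_split s L hs.
have hsn : ~ List.In s (l1 ++ l2)%list by rewrite eL in hL; exact: List.NoDup_remove_2 hL.
have [[hs0 hst] _] := (HL s).1 hs.
exists (l1 ++ l2)%list; split; last by rewrite eL !List.length_app /=; lia.
split; first by rewrite eL in hL; exact: List.NoDup_remove_1 hL.
move=> u; split.
  move=> hu; have huL : List.In u L by rewrite eL; exact: in_app_cons.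
  have [[hu0 _] hud] := (HL u).1 huL; have := hmax u huL.
  have hus : u <> s by move=> e; apply: hsn; rewrite -e.
  by split => //; lra.
move=> [hu hud]; have huL : List.In u L by apply/(HL u).2; split => //; lra.
by rewrite eL in huL; apply: in_app_cons_neq huL _; lra.
Qed.

(** * Energy of a switched solution *)

Lemma hurwitz_family_lyapunov {n p} (M : 'I_p -> mat n) : (forall k, hurwitz (M k)) ->
  exists be K (Wr Wi : 'I_p -> mat n), 0 < be /\ 1 <= K /\
    forall k, quadratic_lyapunov (M k) be K (Wr k) (Wi k).
Proof.
move=> Hh.
have HbK k : exists bK : R * R, 0 < bK.1 /\ 0 < bK.2 /\
    exists W : mat n * mat n, quadratic_lyapunov (M k) bK.1 bK.2 W.1 W.2.
  have [be [K [Wr [Wi [hbe [hK HL]]]]]] := hurwitz_lyapunov _ (Hh k).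
  by exists (be, K); do 2!split => //; exists (Wr, Wi).
have [bK {}HbK] := choice _ HbK.
have [be [hbe Hbe]] := exists_pos_lower_bound _ (fun k => (HbK k).1).
have [K [hK HK]] := exists_upper_bound (fun k => (bK k).2).
have HW k : exists W : mat n * mat n, quadratic_lyapunov (M k) be K W.1 W.2.
  have [_ [hK0 [W HW]]] := HbK k; exists W.
  exact: quadratic_lyapunov_weaken (Hbe k) (HK k) (Rlt_le _ _ hK0) HW.
have [W {}HW] := choice _ HW.
by exists be, K, (fun k => (W k).1), (fun k => (W k).2); do 2!split => //.
Qed.

Lemma exp_le_of_le x y : x <= y -> exp x <= exp y.
Proof. by case=> [h | ->]; [exact/Rlt_le/exp_increasing | exact: Rle_refl]. Qed.

Lemma pow_le_exp_ln (mu B : R) (m : nat) : 1 <= mu -> INR m <= B -> mu ^ m <= exp (B * ln mu).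
Proof.
move=> hmu hm; rewrite -(exp_ln (mu ^ m)); last by apply: pow_lt; lra.
rewrite ln_pow; last lra.
have hl : 0 <= ln mu.
  by case: hmu => [h | <-]; [rewrite -ln_1; apply/Rlt_le/ln_increasing | rewrite ln_1]; lra.
exact/exp_le_of_le/Rmult_le_compat_r.
Qed.

Lemma le_sqrt_mul_of_sqr_le a b c : 0 <= a -> 0 <= b -> 0 <= c ->
  a * a <= c * (b * b) -> a <= sqrt c * b.
Proof.
move=> ha hb hc h; rewrite -(sqrt_square a) // -(sqrt_square b) // -sqrt_mult //; last nra.
by apply: sqrt_le_1_alt.
Qed.

Section SwitchedEnergy.
Context {n p : nat} {M : 'I_p -> mat n} {g : R} {sigma : R -> 'I_p} {x : R -> vec n}.
Context {Wr Wi : 'I_p -> mat n} {be K : R}.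
Hypothesis Hsol : solution g M sigma x.
Hypothesis Hsw : switching_signal sigma.
Hypothesis g_ge0 : 0 <= g.
Hypothesis K_ge1 : 1 <= K.
Hypothesis Hlyap : forall k, quadratic_lyapunov (M k) be K (Wr k) (Wi k).

Definition energy t := qform (Wr (sigma t)) (Wi (sigma t)) (x t) * exp (2 * be * g * t).

Lemma energy_ge0 t : 0 <= energy t.
Proof. by apply: Rmult_le_pos; [exact: qform_ge0 | exact/Rlt_le/exp_pos]. Qed.

Lemma qform_change_mode k k' y : qform (Wr k') (Wi k') y <= K * K * qform (Wr k) (Wi k) y.
Proof.
have [h2 [h1 _]] := Hlyap k'; have [h3 _] := Hlyap k.
by have := h1 y; have := h3 y; have := sq_ge0 y; nra.
Qed.

Lemma energy_jump s t : 0 <= s <= t ->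
  (forall u, s < u < t -> ~ discontinuity sigma u) -> energy t <= K * K * energy s.
Proof.
move=> hst hnd; have hKK : 1 <= K * K by nra.
case: (Req_dec s t) => [<- | hne]; first by have := energy_ge0 s; nra.
have hc := constant_between_discontinuities Hsw.1 s t (proj1 hst) ltac:(lra) hnd.
have hdecay := qform_decay_on_mode_interval Hsol (sigma s) _ _ _ s t g_ge0
  (proj1 hst) ltac:(lra) (fun u hu => hc u ltac:(lra)) (Hlyap (sigma s)).2.2.
have hmode := qform_change_mode (sigma s) (sigma t) (x t).
have he := exp_pos (2 * be * g * t).
by rewrite /energy; nra.
Qed.

(* Switching times are counted in the open interval [(0, t)]; the extra factor [K * K]
   pays for a possible switch at [t] itself. *)
Lemma energy_le_pow_switches {m t L} : 0 <= t -> switch_list sigma t L -> length L = m ->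
  energy t <= (K * K) ^ m.+1 * energy 0.
Proof.
elim: m t L => [|m IH] t L ht hL hlen.
  have := energy_jump 0 t (conj (Rle_refl 0) ht); rewrite /= Rmult_1_r; apply=> u hu hd.
  by case: L hL hlen => [[_ HL]|//] _; apply: ((HL u).2 (conj hu hd)).
have [s hs smax] : exists2 s, List.In s L & forall u, List.In u L -> u <= s.
  by apply: exists_max_in_list => eL; rewrite eL in hlen.
have [[hs0 hst] _] := (proj2 hL s).1 hs.
have [L' [hL' hlen']] := switch_list_remove_max hL hs smax.
have h1 : energy t <= K * K * energy s.
  apply: energy_jump; first lra.
  move=> u hu hd; have hu' : 0 < u < t by lra.
  by have := smax u ((proj2 hL u).2 (conj hu' hd)); lra.
have h2 := IH s L' ltac:(lra) hL' ltac:(by rewrite hlen in hlen'; case: hlen').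
have hKK : 0 <= K * K by nra.
have -> : (K * K) ^ m.+2 = K * K * (K * K) ^ m.+1 by [].
by have := Rmult_le_compat_l _ _ _ hKK h2; lra.
Qed.

Lemma qform_decay_switched {tauD N0 t} : S_ave tauD N0 sigma -> 0 <= t ->
  qform (Wr (sigma t)) (Wi (sigma t)) (x t) <=
  K * K * exp ((N0 + t / tauD) * ln (K * K) - 2 * be * g * t)
    * qform (Wr (sigma 0)) (Wi (sigma 0)) (x 0).
Proof.
move=> HS ht; have [L hL] := exists_switch_list Hsw ht.
have hE := energy_le_pow_switches ht hL erefl.
have hpow := pow_le_exp_ln (K * K) _ _ ltac:(nra) (switch_list_length_le HS ht hL).
rewrite /energy Rmult_0_r exp_0 Rmult_1_r /= in hE.
set A := (N0 + t / tauD) * ln (K * K); set B := 2 * be * g * t.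
have hq0 := qform_ge0 (Wr (sigma 0)) (Wi (sigma 0)) (x 0).
have hKK : 0 <= K * K by nra.
have key : qform (Wr (sigma t)) (Wi (sigma t)) (x t) * exp B <=
    K * K * exp A * qform (Wr (sigma 0)) (Wi (sigma 0)) (x 0).
  apply: (Rle_trans _ _ _ hE).
  by apply: Rmult_le_compat_r => //; exact: Rmult_le_compat_l.
have hB := exp_pos B; rewrite Rminus_def exp_plus exp_Ropp.
apply: (Rmult_le_reg_r (exp B)) => //.
by have -> : K * K * (exp A * / exp B) * qform (Wr (sigma 0)) (Wi (sigma 0)) (x 0) * exp B =
  K * K * exp A * qform (Wr (sigma 0)) (Wi (sigma 0)) (x 0) by field; lra.
Qed.

Lemma qform_decay_rate {tauD N0 lam t} : S_ave tauD N0 sigma -> 0 <= t -> 0 < tauD ->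
  2 * lam + ln (K * K) / tauD <= 2 * be * g ->
  qform (Wr (sigma t)) (Wi (sigma t)) (x t) <=
  K * K * exp (N0 * ln (K * K)) * (exp (- lam * t) * exp (- lam * t))
    * qform (Wr (sigma 0)) (Wi (sigma 0)) (x 0).
Proof.
move=> HS ht htau hrate; apply: (Rle_trans _ _ _ (qform_decay_switched HS ht)).
apply: Rmult_le_compat_r; first exact: qform_ge0.
rewrite [X in _ <= X]Rmult_assoc; apply: Rmult_le_compat_l; first nra.
rewrite -!exp_plus; apply: exp_le_of_le.
have : t * (ln (K * K) / tauD) <= t * (2 * be * g - 2 * lam) by apply: Rmult_le_compat_l; lra.
by rewrite /Rdiv; lra.
Qed.

Lemma nrm_decay_switched {nrm : vec n -> R} {C1 C2 tauD N0 lam t} : is_norm nrm ->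
  0 <= C1 -> 0 <= C2 ->
  (forall y, nrm y * nrm y <= C1 * sq y) -> (forall y, sq y <= C2 * (nrm y * nrm y)) ->
  S_ave tauD N0 sigma -> 0 <= t -> 0 < tauD -> 2 * lam + ln (K * K) / tauD <= 2 * be * g ->
  nrm (x t) <= sqrt (C1 * K * (K * K * exp (N0 * ln (K * K))) * K * C2)
                 * exp (- lam * t) * nrm (x 0).
Proof.
move=> Hn hC1 hC2 HC1 HC2 HS ht htau hrate.
have hqt := qform_decay_rate HS ht htau hrate.
have [hlo _] := Hlyap (sigma t); have [_ [hup _]] := Hlyap (sigma 0).
set Y := exp (- lam * t) in hqt *; set E := exp (N0 * ln (K * K)) in hqt *.
set q0 := qform _ _ (x 0) in hqt.
have hE : 0 < E := exp_pos _; have hq0 : 0 <= q0 := qform_ge0 _ _ _.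
have hsq0 : q0 <= K * (C2 * (nrm (x 0) * nrm (x 0))).
  by apply: (Rle_trans _ _ _ (hup (x 0))); apply: Rmult_le_compat_l; [lra | exact: HC2].
have hA := nrm_ge0 Hn (x t); have hB := nrm_ge0 Hn (x 0).
have hKKE : 0 <= K * K * E by nra.
rewrite Rmult_assoc; apply: le_sqrt_mul_of_sqr_le => //.
- by have := exp_pos (- lam * t); rewrite -/Y; nra.
- by repeat apply: Rmult_le_pos => //; lra.
apply: (Rle_trans _ _ _ (HC1 (x t))).
apply: (Rle_trans _ (C1 * (K * (K * K * E * (Y * Y) * (K * (C2 * (nrm (x 0) * nrm (x 0)))))))).
  apply: Rmult_le_compat_l => //; apply: (Rle_trans _ _ _ (hlo (x t))).
  apply: Rmult_le_compat_l; first lra; apply: (Rle_trans _ _ _ hqt).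
  by apply: Rmult_le_compat_l => //; apply: Rmult_le_pos => //; exact: Rle_0_sqr.
by right; ring.
Qed.
End SwitchedEnergy.

Theorem lemma3 (n p : nat) (M : 'I_p -> mat n) (nrm : vec n -> R)
    (tauD N0 lam : R) :
  is_norm nrm ->
  (forall k : 'I_p, hurwitz (M k)) ->
  0 < tauD -> 0 < N0 -> 0 < lam ->
  exists g0, 0 < g0 /\
    forall g, g0 <= g ->
      exists c, 0 < c /\
        forall sigma : R -> 'I_p, S_ave tauD N0 sigma ->
          forall x : R -> vec n, solution g M sigma x ->
            forall t, 0 <= t -> nrm (x t) <= c * exp (- lam * t) * nrm (x 0).
Proof.
move=> Hn Hh htau hN0 hlam.
have [be [K [Wr [Wi [hbe [hK Hlyap]]]]]] := hurwitz_family_lyapunov M Hh.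
have [C1 [hC1 HC1]] := nrm_sqr_le_sq Hn.
have [C2 [hC2 HC2]] := sq_le_nrm_sqr Hn.
have hlK : 0 <= ln (K * K) / tauD.
  apply: Rmult_le_pos; last exact/Rlt_le/Rinv_0_lt_compat.
  rewrite -ln_1; case: (Req_dec K 1) => [-> | hK1]; first by rewrite Rmult_1_r; lra.
  by apply/Rlt_le/ln_increasing; nra.
pose g0 := (2 * lam + ln (K * K) / tauD) / (2 * be).
have hg0 : 0 <= g0 by apply: Rmult_le_pos; [lra | apply/Rlt_le/Rinv_0_lt_compat; lra].
exists (g0 + 1); split; first lra.
move=> g hg.
have hrate : 2 * lam + ln (K * K) / tauD <= 2 * be * g.
  have -> : 2 * lam + ln (K * K) / tauD = 2 * be * g0 by rewrite /g0; field; lra.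
  by apply: Rmult_le_compat_l; lra.
exists (sqrt (C1 * K * (K * K * exp (N0 * ln (K * K))) * K * C2)); split.
  by apply: sqrt_lt_R0; have := exp_pos (N0 * ln (K * K)); move=> he;
    repeat apply: Rmult_lt_0_compat => //; lra.
move=> sigma HS x Hsol t ht.
have g_ge0 : 0 <= g by lra.
exact: (nrm_decay_switched Hsol HS.1 g_ge0 hK Hlyap Hn (Rlt_le _ _ hC1) (Rlt_le _ _ hC2)
  HC1 HC2 HS ht htau hrate).
Qed.
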